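(* Let $\mathcal H$ be an $As^c$-$Mag$-bialgebra. Then $\mathrm{Prim}\,\mathcal H$ is closed under the operations $\mu^n_i$ for all $n\ge3$ and $1\le i\le n-2$: if $x_1,\dots,x_n\in\mathrm{Prim}\,\mathcal H$ then $\mu^n_i(x_1,\dots,x_n)\in\mathrm{Prim}\,\mathcal H$.
   Context: An $As^c$-$Mag$-bialgebra is a vector space $\mathcal H$ over a field with a bilinear product $\cdot$ (not assumed associative) with two-sided unit $1$ and a coassociative counital coproduct $\Delta$ with $\Delta(1)=1\otimes1$ and $\Delta(x\cdot y)=\Delta(x)\cdot(1\otimes y)+(x\otimes1)\cdot\Delta(y)-x\otimes y$, the product on $\mathcal H\otimes\mathcal H$ being componentwise. $\mathrm{Prim}\,\mathcal H$ is the set of $x$ in the kernel of the counit with $\Delta(x)=x\otimes1+1\otimes x$. $\omega^1(x)=x$, $\omega^n(x_1,\dots,x_n)=\omega^{n-1}(x_1,\dots,x_{n-1})\cdot x_n$; $as(x,y,z)=(x\cdot y)\cdot z-x\cdot(y\cdot z)$; $\mu^3_1=as$; $\mu^n_1(x_1,\dots,x_n)=as(x_1,\omega^{n-2}(x_2,\dots,x_{n-1}),x_n)$ for $n\ge4$; $\mu^4_2(x_1,\dots,x_4)=as(x_1,x_2,x_3\cdot x_4)-as(x_1,x_2,x_3)\cdot x_4$; for $n\ge4$ and $2\le i\le n-2$, $\mu^n_i(x_1,\dots,x_n)=\mu^4_2(x_1,\omega^{n-i-1}(x_2,\dots,x_{n-i}),\omega^{i-1}(x_{n-i+1},\dots,x_{n-1}),x_n)$.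 *)

From mathcomp Require Import all_boot all_order all_algebra.
Set Implicit Arguments. Unset Strict Implicit. Unset Printing Implicit Defensive.
Import GRing.Theory.
Local Open Scope ring_scope.

(* Tensors in H <x> H are represented by finite sequences of pairs
   [(a_1,b_1);...;(a_k,b_k)] standing for sum_i a_i <x> b_i.  Two such
   representatives are identified when they agree as bilinear functionals on
   H_dual x H_dual; over a field the canonical map H <x> H -> Bil(H_dual,H_dual) is
   injective, so this is exactly equality in H <x> H.  Same for H <x> H <x> H. *)

Section Bialg.
Variables (F : fieldType) (H : lmodType F).

Definition is_functional (f : H -> F) : Prop :=
  forall (a : F) (x y : H), f (a *: x + y) = a * f x + f y.

Definition teq2 (s t : seq (H * H)) : Prop :=
  forall f g, is_functional f -> is_functional g ->
    \sum_(p <- s) f p.1 * g p.2 = \sum_(p <- t) f p.1 * g p.2.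

Definition teq3 (s t : seq (H * H * H)) : Prop :=
  forall f g h, is_functional f -> is_functional g -> is_functional h ->
    \sum_(p <- s) f p.1.1 * g p.1.2 * h p.2
    = \sum_(p <- t) f p.1.1 * g p.1.2 * h p.2.

Variables (mul : H -> H -> H) (one : H).

Definition tmul (s t : seq (H * H)) : seq (H * H) :=
  [seq (mul p.1 q.1, mul p.2 q.2) | p <- s, q <- t].

Variables (Delta : H -> seq (H * H)) (eps : H -> F).

Definition AscMagBialgebra : Prop :=
  (forall a x y z, mul (a *: x + y) z = a *: mul x z + mul y z) /\
  (forall a x y z, mul z (a *: x + y) = a *: mul z x + mul z y) /\
  (forall x, mul one x = x) /\ (forall x, mul x one = x) /\
  (forall a x y, teq2 (Delta (a *: x + y))
                      ([seq (a *: p.1, p.2) | p <- Delta x] ++ Delta y)) /\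
  (* Delta coassociative: (Delta <x> id) Delta = (id <x> Delta) Delta *)
  (forall x, teq3 (flatten [seq [seq (q.1, q.2, p.2) | q <- Delta p.1] | p <- Delta x])
                  (flatten [seq [seq (p.1, q.1, q.2) | q <- Delta p.2] | p <- Delta x])) /\
  is_functional eps /\
  (forall x, \sum_(p <- Delta x) eps p.1 *: p.2 = x) /\
  (forall x, \sum_(p <- Delta x) eps p.2 *: p.1 = x) /\
  teq2 (Delta one) [:: (one, one)] /\
  (* Delta(x.y) = Delta(x).(1 <x> y) + (x <x> 1).Delta(y) - x <x> y *)
  (forall x y, teq2 (Delta (mul x y))
                    (tmul (Delta x) [:: (one, y)] ++ tmul [:: (x, one)] (Delta y)
                          ++ [:: (- x, y)])).

Definition Prim (x : H) : Prop :=
  eps x = 0 /\ teq2 (Delta x) [:: (x, one); (one, x)].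

(* arguments are x_1, ..., x_n given as x 1, ..., x n *)
Variable x : nat -> H.

(* omg s m = omega^m(x_s, ..., x_{s+m-1}) for m >= 1 *)
Fixpoint omg (s m : nat) : H :=
  match m with
  | 0 => one (* unused *)
  | m'.+1 => match m' with
             | 0 => x s
             | _ => mul (omg s m') (x (s + m'))
             end
  end.

Definition asc (a b c : H) : H := mul (mul a b) c - mul a (mul b c).

Definition mu42 (a b c d : H) : H := asc a b (mul c d) - mul (asc a b c) d.

(* mu n i for n >= 3, 1 <= i <= n-2.  For i = 1, n = 3 this is as(x1,x2,x3)
   since omega^1(x_2) = x_2. *)
Definition mu (n i : nat) : H :=
  if i == 1%N then asc (x 1) (omg 2 (n - 2)) (x n)
  else mu42 (x 1) (omg 2 (n - i - 1)) (omg (n - i + 1) (i - 1)) (x n).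

End Bialg.

From mathcomp Require Import all_boot all_order all_algebra.
From mathcomp Require Import ring zify.

(* Work with the reduced coproduct D(z) = Delta z - z (x) 1 - 1 (x) z
   (rcopair below), tested against pairs of linear functionals; z is
   primitive iff eps z = 0 and D(z) = 0.  The product rule for Delta becomes the Leibniz rule
   D(ab) = D(a)(1 (x) b) + (a (x) 1)D(b) + a (x) b.  Applying it twice, the
   cross terms cancel in D(as(a,b,w)) when a is primitive, leaving
   (as(a,b,-) (x) id) D(w); and D(cd) = D(c)(1 (x) d) + c (x) d when d is
   primitive.  Hence as(a,b,c) is primitive for primitive a, c, and
   mu42(a,b,c,d) = as(a,b,cd) - as(a,b,c)d is primitive for primitive a, d,
   both of its terms having reduced coproduct
   (as(a,b,-) (x) (-d)) D(c) + as(a,b,c) (x) d.  Every mu^n_i has one of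
   these two shapes with outer arguments x_1 and x_n. *)

Set Implicit Arguments. Unset Strict Implicit. Unset Printing Implicit Defensive.
Import GRing.Theory.
Local Open Scope ring_scope.

Section Functionals.
Variables (F : fieldType) (H : lmodType F) (f : H -> F).
Hypothesis f_lin : is_functional f.

Lemma functionalB : {morph f : x y / x - y}.
Proof. exact: zmod_morphism_linear f_lin. Qed.

Lemma functional0 : f 0 = 0.
Proof. by rewrite -(subrr 0) functionalB subrr. Qed.

Lemma functionalD : {morph f : x y / x + y}.
Proof. by move=> x y; rewrite -[x]scale1r (f_lin 1 x y) mul1r scale1r. Qed.

Lemma functionalZ a : {morph f : x / a *: x >-> a * x}.
Proof. exact: (scalable_linear f_lin a). Qed.

Lemma functional_sum I (r : seq I) (G : I -> H) :
  f (\sum_(i <- r) G i) = \sum_(i <- r) f (G i).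
Proof. exact: (big_morph f functionalD functional0). Qed.

Lemma functional_comp (h : H -> H) : linear h -> is_functional (f \o h).
Proof. by move=> h_lin a x y /=; rewrite h_lin f_lin. Qed.

End Functionals.

Section PairedCoproduct.
Variables (F : fieldType) (H : lmodType F) (mul : H -> H -> H) (one : H)
  (Delta : H -> seq (H * H)) (eps : H -> F).
Implicit Types (f g : H -> F).

Definition copair z f g := \sum_(p <- Delta z) f p.1 * g p.2.

Definition rcopair z f g := copair z f g - f z * g one - f one * g z.

Definition prim_pair a :=
  eps a = 0 /\ forall f g, is_functional f -> is_functional g -> rcopair a f g = 0.

Lemma prim_pairP a : Prim one Delta eps a <-> prim_pair a.
Proof.
split=> -[eps_a Delta_a]; split=> // f g f_lin g_lin; rewrite /rcopair /copair.
  by rewrite (Delta_a f g f_lin g_lin) big_cons big_seq1 /=; ring.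
apply/eqP; rewrite big_cons big_seq1 /= -subr_eq0 opprD addrA.
exact/eqP/(Delta_a f g f_lin g_lin).
Qed.

Lemma rcopair_subl z f f1 f2 g : (forall u, f u = f1 u - f2 u) ->
  rcopair z f g = rcopair z f1 g - rcopair z f2 g.
Proof.
move=> f_def; rewrite /rcopair /copair !f_def.
under eq_bigr => p _ do rewrite f_def mulrBl.
rewrite sumrB; ring.
Qed.

Hypothesis mulDl : forall a x y z, mul (a *: x + y) z = a *: mul x z + mul y z.
Hypothesis mulDr : forall a x y z, mul z (a *: x + y) = a *: mul z x + mul z y.
Hypothesis mul1x : forall x, mul one x = x.
Hypothesis mulx1 : forall x, mul x one = x.
Hypothesis DeltaD : forall a x y, teq2 (Delta (a *: x + y))
  ([seq (a *: p.1, p.2) | p <- Delta x] ++ Delta y).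
Hypothesis eps_lin : is_functional eps.
Hypothesis counit_l : forall x, \sum_(p <- Delta x) eps p.1 *: p.2 = x.
Hypothesis counit_r : forall x, \sum_(p <- Delta x) eps p.2 *: p.1 = x.
Hypothesis Delta_mul : forall x y, teq2 (Delta (mul x y))
  (tmul mul (Delta x) [:: (one, y)] ++ tmul mul [:: (x, one)] (Delta y)
   ++ [:: (- x, y)]).

Lemma functional_mull a f : is_functional f -> is_functional (fun u => f (mul a u)).
Proof. by move=> f_lin; apply: (functional_comp f_lin) => c x y; apply: mulDr. Qed.

Lemma functional_mulr b f : is_functional f -> is_functional (fun u => f (mul u b)).
Proof. by move=> f_lin; apply: (functional_comp f_lin) => c x y; apply: mulDl. Qed.

Lemma functional_asc a b f :
  is_functional f -> is_functional (fun u => f (asc mul a b u)).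
Proof.
move=> f_lin; apply: (functional_comp f_lin) => c x y.
by rewrite /asc !mulDr scalerBr opprD addrACA.
Qed.

Lemma copairB x y f g : is_functional f -> is_functional g ->
  copair (x - y) f g = copair x f g - copair y f g.
Proof.
move=> f_lin g_lin; rewrite /copair [x - y]addrC -scaleN1r (DeltaD _ _ _ f_lin g_lin).
rewrite big_cat big_map addrC -sumrN; congr (_ + _).
by apply: eq_bigr => p _; rewrite functionalZ // mulN1r mulNr.
Qed.

Lemma copair_mul x y f g : is_functional f -> is_functional g ->
  copair (mul x y) f g = copair x f (fun u => g (mul u y))
                         + copair y (fun u => f (mul x u)) g - f x * g y.
Proof.
move=> f_lin g_lin; rewrite /copair (Delta_mul _ _ f_lin g_lin) !big_cat /=.
rewrite /tmul !big_allpairs_dep /= big_seq1 big_map /=.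
under eq_bigr => p _ do rewrite big_seq1 /= mulx1.
under [in X in _ + (X + _)]eq_bigr => p _ do rewrite mul1x.
by rewrite big_nil addr0 -(scaleN1r x) functionalZ // mulN1r mulNr addrA.
Qed.

Lemma copair_eps_l z g : is_functional g -> copair z eps g = g z.
Proof.
move=> g_lin; rewrite -{2}(counit_l z) functional_sum //.
by apply: eq_bigr => p _; rewrite functionalZ.
Qed.

Lemma copair_eps_r z f : is_functional f -> copair z f eps = f z.
Proof.
move=> f_lin; rewrite -{2}(counit_r z) functional_sum //.
by apply: eq_bigr => p _; rewrite functionalZ // mulrC.
Qed.

Lemma eps_mul a b : eps (mul a b) = eps a * eps b.
Proof.
have := copair_mul a b eps_lin eps_lin.
rewrite copair_eps_l // (copair_eps_l _ (functional_mulr b eps_lin)).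
rewrite (copair_eps_r _ (functional_mull a eps_lin)) /= => h.
apply/eqP; rewrite -subr_eq0 -(subrr (eps (mul a b))) {2}h.
by apply/eqP; ring.
Qed.

Lemma eps_asc a b c : eps (asc mul a b c) = 0.
Proof. by rewrite /asc functionalB // !eps_mul mulrA subrr. Qed.

Lemma rcopairB x y f g : is_functional f -> is_functional g ->
  rcopair (x - y) f g = rcopair x f g - rcopair y f g.
Proof. by move=> f_lin g_lin; rewrite /rcopair copairB // !functionalB //; ring. Qed.

Lemma rcopair_mul a b f g : is_functional f -> is_functional g ->
  rcopair (mul a b) f g = rcopair a f (fun u => g (mul u b))
                          + rcopair b (fun u => f (mul a u)) g + f a * g b.
Proof. by move=> f_lin g_lin; rewrite /rcopair copair_mul // mul1x mulx1; ring. Qed.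

Lemma rcopair_mul_prim_r c d f g : prim_pair d ->
  is_functional f -> is_functional g ->
  rcopair (mul c d) f g = rcopair c f (fun u => g (mul u d)) + f c * g d.
Proof.
move=> [_ d_prim] f_lin g_lin.
by rewrite rcopair_mul // d_prim ?addr0 //; apply: functional_mull.
Qed.

Lemma rcopair_asc_prim_l a b w f g : prim_pair a ->
  is_functional f -> is_functional g ->
  rcopair (asc mul a b w) f g = rcopair w (fun u => f (asc mul a b u)) g.
Proof.
move=> [_ a_prim] f_lin g_lin.
have fmul_lin a' := functional_mull a' f_lin.
have gmul_lin b' := functional_mulr b' g_lin.
rewrite (@rcopair_subl w (fun u => f (asc mul a b u))
  (fun u => f (mul (mul a b) u)) (fun u => f (mul a (mul b u)))); last first.
  by move=> u; rewrite functionalB.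
rewrite rcopairB // !rcopair_mul // !a_prim //; first ring.
exact: (functional_mulr b (gmul_lin w)).
Qed.

Lemma asc_prim a b c : prim_pair a -> prim_pair c -> prim_pair (asc mul a b c).
Proof.
move=> a_prim [_ c_prim]; split=> [|f g f_lin g_lin]; first exact: eps_asc.
by rewrite rcopair_asc_prim_l // c_prim //; apply: functional_asc.
Qed.

Lemma mu42_prim a b c d : prim_pair a -> prim_pair d -> prim_pair (mu42 mul a b c d).
Proof.
move=> a_prim d_prim; split=> [|f g f_lin g_lin].
  by rewrite /mu42 functionalB // eps_mul !eps_asc mul0r subrr.
have fasc_lin := functional_asc a b f_lin.
rewrite /mu42 rcopairB // rcopair_asc_prim_l // !rcopair_mul_prim_r //.
by rewrite rcopair_asc_prim_l //= ?subrr //; exact: (functional_mulr d g_lin).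
Qed.

End PairedCoproduct.

Theorem proposition2p8 (F : fieldType) (H : lmodType F)
  (mul : H -> H -> H) (one : H) (Delta : H -> seq (H * H)) (eps : H -> F) :
  AscMagBialgebra mul one Delta eps ->
  forall (n i : nat) (x : nat -> H),
    (3 <= n)%N -> (1 <= i <= n - 2)%N ->
    (forall k, (1 <= k <= n)%N -> Prim one Delta eps (x k)) ->
    Prim one Delta eps (mu mul one x n i).
Proof.
move=> [mulDl [mulDr [mul1x [mulx1 [DeltaD [_ [eps_lin [counit_l [counit_r [_ Delta_mul]]]]]]]]]].
move=> n i x n_ge3 i_range x_prim.
have x1_prim : prim_pair one Delta eps (x 1%N) by apply/prim_pairP/x_prim; lia.
have xn_prim : prim_pair one Delta eps (x n) by apply/prim_pairP/x_prim; lia.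
apply/prim_pairP; rewrite /mu; case: ifP => _.
  exact: asc_prim.
exact: mu42_prim.
Qed.
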